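(* Let $(X,d)$ be a locally compact, geodesically complete CAT(0)-space connected at infinity, and let $d'$ be a metric on $X$ such that $(X,d')$ is a locally compact geodesically complete CAT(0)-space and $d(x,y)\le1\iff d'(x,y)\le1$ for all $x,y\in X$. Let $a,b$ be complete geodesics of $(X,d)$ connected by an asymptotic chain $a=a_0,a_1,\dots,a_n=b$ such that for every $i$ the image of $a_i$ is also the image of a complete geodesic of $(X,d')$. If $d(a(t_1),a(t_2))=d'(a(t_1),a(t_2))$ for all $t_1,t_2\in\mathbb R$, then $d(b(t_1),b(t_2))=d'(b(t_1),b(t_2))$ for all $t_1,t_2\in\mathbb R$.
   Context: Two geodesic rays in a CAT(0)-space are asymptotic if their Hausdorff distance is finite; two complete geodesics are asymptotic (in some direction) if they contain asymptotic rays. Geodesics $a,b$ are connected by an asymptotic chain if there is a finite sequence of complete geodesics $a=a_0,\dots,a_n=b$ such that $a_{i-1}$ and $a_i$ are asymptotic in some direction for each $1\le i\le n$. Geodesically complete: geodesic, and every geodesic segment lies in a complete geodesic. Connected at infinity: the complement of every metric ball is path connected. *)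

From Stdlib Require Import Reals Lra List.
Open Scope R_scope.

Section MetricNotions.
Context {X : Type} (d : X -> X -> R).

Definition is_metric : Prop :=
  (forall x y, 0 <= d x y) /\
  (forall x y, d x y = 0 <-> x = y) /\
  (forall x y, d x y = d y x) /\
  (forall x y z, d x z <= d x y + d y z).

Definition ball (x : X) (r : R) : X -> Prop := fun y => d x y < r.

Definition is_open (U : X -> Prop) : Prop :=
  forall x, U x -> exists e, 0 < e /\ forall y, ball x e y -> U y.

Definition is_compact (K : X -> Prop) : Prop :=
  forall (I : Type) (U : I -> X -> Prop),
    (forall i, is_open (U i)) ->
    (forall x, K x -> exists i, U i x) ->
    exists l : list I, forall x, K x -> exists i, In i l /\ U i x.

Definition locally_compact : Prop :=
  forall x, exists K, is_compact K /\ exists e, 0 < e /\ forall y, ball x e y -> K y.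

Definition geod_seg (c : R -> X) (L : R) : Prop :=
  0 <= L /\ forall s t, 0 <= s <= L -> 0 <= t <= L -> d (c s) (c t) = Rabs (s - t).

Definition geod_from_to (c : R -> X) (x y : X) : Prop :=
  geod_seg c (d x y) /\ c 0 = x /\ c (d x y) = y.

Definition geodesic_space : Prop :=
  forall x y, exists c, geod_from_to c x y.

Definition complete_geodesic (g : R -> X) : Prop :=
  forall s t, d (g s) (g t) = Rabs (s - t).

Definition geod_ray (r : R -> X) : Prop :=
  forall s t, 0 <= s -> 0 <= t -> d (r s) (r t) = Rabs (s - t).

Definition geodesically_complete : Prop :=
  geodesic_space /\
  forall c L, geod_seg c L ->
    exists g, complete_geodesic g /\
      forall s, 0 <= s <= L -> exists t, c s = g t.

Definition eucl (P Q : R * R) : R :=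
  sqrt ((fst P - fst Q)^2 + (snd P - snd Q)^2).

Definition interp (A B : R * R) (t : R) : R * R :=
  (fst A + t * (fst B - fst A), snd A + t * (snd B - snd A)).

(* CAT(0) comparison inequality between a point on one side and a point on
   another side of a geodesic triangle, with respect to comparison sides [A,B]
   and [A',B'] in the Euclidean plane. *)
Definition comp_ineq (side1 side2 : (R -> X) * R * (R * R) * (R * R)) : Prop :=
  let '(c, L, A, B) := side1 in
  let '(c', L', A', B') := side2 in
  forall s s', 0 <= s <= L -> 0 <= s' <= L' ->
    d (c s) (c' s') <= eucl (interp A B (s / L)) (interp A' B' (s' / L')).

Definition CAT0 : Prop :=
  geodesic_space /\
  forall (x y z : X) (c1 c2 c3 : R -> X),
    geod_from_to c1 x y -> geod_from_to c2 y z -> geod_from_to c3 z x ->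
    forall P Q S : R * R,
      eucl P Q = d x y -> eucl Q S = d y z -> eucl S P = d z x ->
      let sides := (c1, d x y, P, Q) :: (c2, d y z, Q, S) :: (c3, d z x, S, P) :: nil in
      forall u v, In u sides -> In v sides -> comp_ineq u v.

Definition path_continuous (p : R -> X) : Prop :=
  forall t, 0 <= t <= 1 -> forall e, 0 < e -> exists delta, 0 < delta /\
    forall s, 0 <= s <= 1 -> Rabs (s - t) < delta -> d (p s) (p t) < e.

Definition path_connected (A : X -> Prop) : Prop :=
  forall x y, A x -> A y -> exists p : R -> X,
    path_continuous p /\ p 0 = x /\ p 1 = y /\ forall t, 0 <= t <= 1 -> A (p t).

Definition connected_at_infinity : Prop :=
  forall x r, path_connected (fun y => ~ (d x y <= r)).

Definition asymptotic_rays (r1 r2 : R -> X) : Prop :=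
  exists C, (forall s, 0 <= s -> exists t, 0 <= t /\ d (r1 s) (r2 t) <= C) /\
            (forall t, 0 <= t -> exists s, 0 <= s /\ d (r1 s) (r2 t) <= C).

Definition asymptotic_geodesics (a b : R -> X) : Prop :=
  exists r1 r2, geod_ray r1 /\ geod_ray r2 /\
    (forall s, 0 <= s -> exists t, r1 s = a t) /\
    (forall s, 0 <= s -> exists t, r2 s = b t) /\
    asymptotic_rays r1 r2.

Definition asymptotic_chain (f : nat -> R -> X) (n : nat) : Prop :=
  (forall i, (i <= n)%nat -> complete_geodesic (f i)) /\
  (forall i, (1 <= i <= n)%nat -> asymptotic_geodesics (f (i - 1)%nat) (f i)).

End MetricNotions.

Definition same_image {X : Type} (g h : R -> X) : Prop :=
  (forall s, exists t, g s = h t) /\ (forall t, exists s, h t = g s).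

(* Along the chain it suffices to treat one asymptotic pair a, b.  Let beta be
   the Busemann function of a ray r contained in a.  Since r is also a d'-ray
   and d, d' have the same balls of every integer radius (the unit balls agree
   and both spaces are geodesic), beta is the same for d and d', hence it is
   1-Lipschitz for d'.  Along b, beta is convex (CAT(0)) and 1-Lipschitz, and
   beta(b t) + t stays bounded on the end of b asymptotic to r; so beta o b is
   affine with slope +-1 and |s - t| <= d'(b s, b t).  Conversely
   d'(b s, b t) <= 1 whenever |s - t| <= 1, and since b runs along a
   d'-geodesic this forces d'(b s, b t) = |s - t|. *)

From Stdlib Require Import Reals Lra Lia ClassicalEpsilon.
Open Scope R_scope.

Lemma sqrt_sum_sq_combination_le a1 a2 b1 b2 k l : 0 <= k -> 0 <= l ->
  sqrt ((k * a1 + l * b1) ^ 2 + (k * a2 + l * b2) ^ 2)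
  <= k * sqrt (a1 ^ 2 + a2 ^ 2) + l * sqrt (b1 ^ 2 + b2 ^ 2).
Proof.
  intros Hk Hl.
  set (na := sqrt (a1 ^ 2 + a2 ^ 2)); set (nb := sqrt (b1 ^ 2 + b2 ^ 2)).
  assert (Hna : 0 <= na) by apply sqrt_pos.
  assert (Hnb : 0 <= nb) by apply sqrt_pos.
  assert (Hna2 : na ^ 2 = a1 ^ 2 + a2 ^ 2) by (apply pow2_sqrt; nra).
  assert (Hnb2 : nb ^ 2 = b1 ^ 2 + b2 ^ 2) by (apply pow2_sqrt; nra).
  assert (Hcauchy_schwarz : a1 * b1 + a2 * b2 <= na * nb).
  { assert (Hlagrange : (na * nb) ^ 2 - (a1 * b1 + a2 * b2) ^ 2 = (a1 * b2 - a2 * b1) ^ 2)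
      by (rewrite Rpow_mult_distr, Hna2, Hnb2; ring).
    assert (0 <= na * nb) by nra.
    destruct (Rle_dec (a1 * b1 + a2 * b2) 0); [lra|].
    apply Rsqr_incr_0_var; [|assumption].
    unfold Rsqr. pose proof (pow2_ge_0 (a1 * b2 - a2 * b1)). nra. }
  rewrite <- (sqrt_pow2 (k * na + l * nb)) by nra.
  apply sqrt_le_1_alt.
  assert (k * l * (a1 * b1 + a2 * b2) <= k * l * (na * nb))
    by (apply Rmult_le_compat_l; nra).
  replace ((k * na + l * nb) ^ 2) with (k ^ 2 * na ^ 2 + l ^ 2 * nb ^ 2 + 2 * (k * l * (na * nb)))
    by ring.
  rewrite Hna2, Hnb2. nra.
Qed.

Lemma eucl_sym P Q : eucl P Q = eucl Q P.
Proof. unfold eucl. f_equal. ring. Qed.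

Lemma interp_0 A B : interp A B 0 = A.
Proof. destruct A. unfold interp. simpl. f_equal; ring. Qed.

Lemma eucl_interp_le P Q S lam : 0 <= lam <= 1 ->
  eucl (interp P Q lam) S <= (1 - lam) * eucl P S + lam * eucl Q S.
Proof.
  intros Hlam. destruct P as [p1 p2], Q as [q1 q2], S as [s1 s2].
  unfold eucl, interp; simpl.
  replace (p1 + lam * (q1 - p1) - s1) with ((1 - lam) * (p1 - s1) + lam * (q1 - s1)) by ring.
  replace (p2 + lam * (q2 - p2) - s2) with ((1 - lam) * (p2 - s2) + lam * (q2 - s2)) by ring.
  apply sqrt_sum_sq_combination_le; lra.
Qed.

Lemma eucl_triangle_exists L A B : 0 < L -> 0 <= A -> 0 <= B ->
  L <= A + B -> A <= L + B -> B <= L + A ->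
  exists P Q S, eucl P Q = L /\ eucl Q S = B /\ eucl S P = A.
Proof.
  intros. set (u := (L * L + A * A - B * B) / (2 * L)).
  assert (Hu : u * (2 * L) = L * L + A * A - B * B) by (unfold u; field; lra).
  assert (Hu_le : u <= A) by nra.
  assert (Hu_ge : - A <= u) by nra.
  assert (Hv : 0 <= A ^ 2 - u ^ 2) by nra.
  set (v := sqrt (A ^ 2 - u ^ 2)).
  assert (Hv2 : v ^ 2 = A ^ 2 - u ^ 2) by apply (pow2_sqrt _ Hv).
  exists (0, 0), (L, 0), (u, v). unfold eucl; simpl fst; simpl snd.
  split; [|split].
  - replace ((0 - L) ^ 2 + (0 - 0) ^ 2) with (L ^ 2) by ring. apply sqrt_pow2; lra.
  - replace ((L - u) ^ 2 + (0 - v) ^ 2) with (B ^ 2). { apply sqrt_pow2; lra. }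
    replace ((0 - v) ^ 2) with (v ^ 2) by ring. rewrite Hv2.
    replace (B ^ 2) with (L * L + A * A - u * (2 * L)) by (rewrite Hu; ring). ring.
  - replace ((u - 0) ^ 2 + (v - 0) ^ 2) with (A ^ 2). { apply sqrt_pow2; lra. }
    replace ((v - 0) ^ 2) with (v ^ 2) by ring. rewrite Hv2. ring.
Qed.

Definition convex (g : R -> R) : Prop :=
  forall u v lam, 0 <= lam <= 1 -> g (u + lam * (v - u)) <= (1 - lam) * g u + lam * g v.

Lemma convex_bounded_above_nonincreasing (g : R -> R) K :
  convex g -> (forall u, 0 <= u -> g u <= K) -> forall u v, u <= v -> g v <= g u.
Proof.
  intros Hg HK u v Huv. destruct (Rle_dec (g v) (g u)) as [|Hlt]; [assumption|exfalso].
  assert (Huv' : u < v) by (destruct (Req_dec u v); [subst; lra | lra]).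
  set (slope := (g v - g u) / (v - u)).
  assert (Hslope : 0 < slope) by (apply Rdiv_lt_0_compat; lra).
  set (w := Rmax 0 v + Rabs ((K - g u) / slope) + 1).
  assert (Hw0 : 0 <= Rmax 0 v) by apply Rmax_l.
  assert (Hwv : v <= Rmax 0 v) by apply Rmax_r.
  pose proof (Rabs_pos ((K - g u) / slope)).
  assert (Hfar : (K - g u) / slope < w - u) by (pose proof (Rle_abs ((K - g u) / slope)); unfold w; lra).
  assert (Hchord : slope * (w - u) <= g w - g u).
  { assert (Hvw : v < w) by (unfold w; lra).
    set (lam := (v - u) / (w - u)).
    assert (HlamD : lam * (w - u) = v - u) by (unfold lam; field; lra).
    assert (Hlam : 0 <= lam <= 1).
    { split; [apply Rlt_le, Rdiv_lt_0_compat; lra | nra]. }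
    specialize (Hg u w lam Hlam).
    replace (u + lam * (w - u)) with v in Hg by lra.
    assert (Hslope_uv : slope * (v - u) = g v - g u) by (unfold slope; field; lra).
    assert (Hscaled : (g v - g u) * (w - u) <= (v - u) * (g w - g u)).
    { rewrite <- HlamD. apply Rmult_le_compat_r with (r := w - u) in Hg; nra. }
    rewrite <- Hslope_uv in Hscaled. nra. }
  assert (K - g u < slope * (w - u)).
  { apply (Rmult_lt_compat_l slope) in Hfar; [|assumption].
    replace (slope * ((K - g u) / slope)) with (K - g u) in Hfar by (field; lra). lra. }
  assert (g w <= K) by (apply HK; unfold w; lra).
  lra.
Qed.

Lemma expanding_unit_short_isometry (phi : R -> R) :
  (forall x y, Rabs (x - y) <= Rabs (phi x - phi y)) ->
  (forall x y, Rabs (x - y) <= 1 -> Rabs (phi x - phi y) <= 1) ->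
  forall x y, Rabs (phi x - phi y) = Rabs (x - y).
Proof.
  intros Hexp Hshort.
  assert (Hwindow : forall x w, x <= w <= x + 1 -> Rabs (phi x - phi w) <= w - x).
  { (* [|phi x - phi (x + 1)|] is forced to be 1, and the lower bounds put
       [phi w] between [phi x] and [phi (x + 1)]. *)
    intros x w Hw.
    pose proof (Hexp x (x + 1)); pose proof (Hexp x w); pose proof (Hexp w (x + 1)).
    pose proof (Hshort x (x + 1)); pose proof (Hshort x w); pose proof (Hshort w (x + 1)).
    split_Rabs; lra. }
  assert (Hstep : forall (n : nat) x y, x <= y <= x + INR n -> Rabs (phi x - phi y) <= y - x).
  { induction n as [|n IH]; intros x y Hxy.
    - simpl in Hxy. apply Hwindow. lra.
    - rewrite S_INR in Hxy. destruct (Rle_dec y (x + 1)).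
      + apply Hwindow. lra.
      + pose proof (Hwindow x (x + 1) ltac:(lra)). pose proof (IH (x + 1) y ltac:(lra)).
        pose proof (Rabs_triang (phi x - phi (x + 1)) (phi (x + 1) - phi y)).
        replace (phi x - phi (x + 1) + (phi (x + 1) - phi y)) with (phi x - phi y) in * by ring.
        lra. }
  intros x y. apply Rle_antisym; [|apply Hexp].
  destruct (INR_unbounded (Rabs (x - y))) as [n Hn].
  destruct (Rle_dec x y).
  - rewrite (Rabs_minus_sym x), (Rabs_right (y - x)) by lra.
    apply Hstep with n. rewrite Rabs_minus_sym, Rabs_right in Hn; lra.
  - rewrite (Rabs_minus_sym (phi x)), (Rabs_right (x - y)) by lra.
    apply Hstep with n. rewrite Rabs_right in Hn; lra.
Qed.

Lemma ray_in_geodesic_affine {X} (e : X -> X -> R) (b r : R -> X) :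
  complete_geodesic e b -> geod_ray e r -> (forall s, 0 <= s -> exists t, r s = b t) ->
  exists s0 eps, Rabs eps = 1 /\ forall s, 0 <= s -> r s = b (s0 + eps * s).
Proof.
  intros Hb Hr Hrb.
  destruct (Hrb 0 (Rle_refl 0)) as [t0 Ht0]. destruct (Hrb 1 Rle_0_1) as [t1 Ht1].
  assert (Hparam : forall s t, 0 <= s -> r s = b t -> Rabs (t - t0) = s /\ Rabs (t - t1) = Rabs (s - 1)).
  { intros s t Hs Hst. split.
    - rewrite <- Hb, <- Hst, <- Ht0, Hr, Rminus_0_r, Rabs_right; lra.
    - rewrite <- Hb, <- Hst, <- Ht1, Hr; lra. }
  destruct (Hparam 1 t1 Rle_0_1 Ht1) as [Hunit _].
  exists t0, (t1 - t0). split; [exact Hunit|].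
  intros s Hs. destruct (Hrb s Hs) as [t Ht]. rewrite Ht. f_equal.
  destruct (Hparam s t Hs Ht) as [Hd0 Hd1].
  assert (Hdir : t1 - t0 = 1 \/ t1 - t0 = -1) by (split_Rabs; lra).
  destruct Hdir as [Heps | Heps]; rewrite Heps; split_Rabs; lra.
Qed.

Section Cat0Convexity.
Context {X : Type} (e : X -> X -> R).
Hypotheses (He : is_metric e) (Hcat : CAT0 e).

Lemma cat0_segment_dist_convex (c : R -> X) x y p lam :
  geod_from_to e c x y -> 0 < e x y -> 0 <= lam <= 1 ->
  e (c (lam * e x y)) p <= (1 - lam) * e x p + lam * e y p.
Proof.
  intros Hc Hxy Hlam. destruct He as [Hpos [_ [Hsym Htri]]]. destruct Hcat as [Hgeod Hcomp].
  destruct (Hgeod y p) as [c2 Hc2]. destruct (Hgeod p x) as [c3 Hc3].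
  pose proof (Htri x p y); pose proof (Htri p y x); pose proof (Htri y x p).
  pose proof (Hsym x p); pose proof (Hsym p y); pose proof (Hsym y x).
  destruct (eucl_triangle_exists (e x y) (e p x) (e y p)) as [P [Q [S [HPQ [HQS HSP]]]]];
    auto; try lra.
  specialize (Hcomp x y p c c2 c3 Hc Hc2 Hc3 P Q S HPQ HQS HSP
    (c, e x y, P, Q) (c3, e p x, S, P) ltac:(simpl; auto) ltac:(simpl; auto)
    (lam * e x y) 0 ltac:(nra) ltac:(split; [lra | apply Hpos])).
  destruct Hc3 as [_ [Hc30 _]]. rewrite Hc30 in Hcomp.
  replace (lam * e x y / e x y) with lam in Hcomp by (field; lra).
  replace (0 / e p x) with 0 in Hcomp by (unfold Rdiv; ring).
  rewrite interp_0 in Hcomp.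
  eapply Rle_trans; [exact Hcomp|]. eapply Rle_trans; [apply eucl_interp_le; exact Hlam|].
  rewrite (eucl_sym P S), HSP, HQS, (Hsym p x). lra.
Qed.

Lemma complete_geodesic_segment (b : R -> X) x y :
  complete_geodesic e b -> x <> y ->
  geod_from_to e (fun u => b (x + u * ((y - x) / Rabs (y - x)))) (b x) (b y).
Proof.
  intros Hb Hxy. assert (Hpos : 0 < Rabs (y - x)) by (apply Rabs_pos_lt; lra).
  assert (Hunit : Rabs ((y - x) / Rabs (y - x)) = 1).
  { unfold Rdiv. rewrite Rabs_mult, Rabs_inv, Rabs_Rabsolu. field. lra. }
  unfold geod_from_to, geod_seg. rewrite Hb, (Rabs_minus_sym x y). split; [split|split].
  - apply Rabs_pos.
  - intros s t _ _. rewrite Hb.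
    replace (x + s * ((y - x) / Rabs (y - x)) - (x + t * ((y - x) / Rabs (y - x))))
      with ((s - t) * ((y - x) / Rabs (y - x))) by ring.
    rewrite Rabs_mult, Hunit. ring.
  - f_equal. ring.
  - f_equal. field. lra.
Qed.

Lemma cat0_geodesic_dist_convex (b : R -> X) p x y lam :
  complete_geodesic e b -> 0 <= lam <= 1 ->
  e (b (x + lam * (y - x))) p <= (1 - lam) * e (b x) p + lam * e (b y) p.
Proof.
  intros Hb Hlam. destruct (Req_dec x y) as [<-|Hxy].
  { replace (x + lam * (x - x)) with x by ring. lra. }
  assert (Hlen : e (b x) (b y) = Rabs (y - x)) by (rewrite Hb; apply Rabs_minus_sym).
  pose proof (cat0_segment_dist_convex _ _ _ p lam (complete_geodesic_segment b x y Hb Hxy))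
    as Hconv.
  rewrite Hlen in Hconv.
  replace (x + lam * Rabs (y - x) * ((y - x) / Rabs (y - x))) with (x + lam * (y - x)) in Hconv
    by (field; apply Rabs_no_R0; lra).
  apply Hconv; [apply Rabs_pos_lt; lra | exact Hlam].
Qed.

End Cat0Convexity.

Section Busemann.
Context {X : Type} (e : X -> X -> R) (r : R -> X).
Hypotheses (He : is_metric e) (Hr : geod_ray e r).

Definition busemann_value (x : X) (m : R) : Prop :=
  (forall T, 0 <= T -> m <= e x (r T) - T) /\
  (forall eps, 0 < eps -> exists T, 0 <= T /\ e x (r T) - T < m + eps).

(* Junk value when [r] is not a geodesic ray: the infimum need not exist. *)
Definition busemann (x : X) : R := epsilon (inhabits 0) (busemann_value x).

Lemma dist_ray_sub_antitone x T T' : 0 <= T <= T' -> e x (r T') - T' <= e x (r T) - T.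
Proof.
  intros HT. destruct He as [_ [_ [_ Htri]]]. pose proof (Htri x (r T) (r T')) as Hxy.
  rewrite Hr, Rabs_left1 in Hxy; lra.
Qed.

Lemma busemann_value_exists x : exists m, busemann_value x m.
Proof.
  destruct He as [_ [_ [Hsym Htri]]].
  set (E := fun y => exists T, 0 <= T /\ y = T - e x (r T)).
  assert (Hbound : bound E).
  { exists (e x (r 0)). intros y [T [HT ->]]. pose proof (Htri (r 0) x (r T)) as Htri0.
    rewrite Hr, Rminus_0_l, Rabs_Ropp, Rabs_right, (Hsym (r 0)) in Htri0; lra. }
  assert (Hinh : exists y, E y) by (exists (0 - e x (r 0)), 0; split; [lra | reflexivity]).
  destruct (completeness E Hbound Hinh) as [M [HMub HMleast]].
  exists (- M). split.
  - intros T HT. assert (T - e x (r T) <= M) by (apply HMub; exists T; auto). lra.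
  - intros eps Heps.
    destruct (excluded_middle_informative (exists T, 0 <= T /\ e x (r T) - T < - M + eps))
      as [Hex|Hnex]; [exact Hex|exfalso].
    assert (Hub : is_upper_bound E (M - eps)).
    { intros y [T [HT ->]]. destruct (Rle_dec (T - e x (r T)) (M - eps)); [assumption|].
      exfalso. apply Hnex. exists T. split; [assumption | lra]. }
    specialize (HMleast _ Hub). lra.
Qed.

Lemma busemann_spec x : busemann_value x (busemann x).
Proof. unfold busemann. apply epsilon_spec, busemann_value_exists. Qed.

Lemma busemann_le_dist_ray x T : 0 <= T -> busemann x <= e x (r T) - T.
Proof. apply (proj1 (busemann_spec x)). Qed.

Lemma busemann_approx x eps : 0 < eps -> exists T, 0 <= T /\ e x (r T) - T < busemann x + eps.
Proof. apply (proj2 (busemann_spec x)). Qed.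

Lemma busemann_lipschitz x y : Rabs (busemann x - busemann y) <= e x y.
Proof.
  assert (Hone : forall x y, busemann x <= busemann y + e x y).
  { intros x' y'. destruct He as [_ [_ [_ Htri]]]. apply le_epsilon. intros eps Heps.
    destruct (busemann_approx y' eps Heps) as [T [HT HTy]].
    pose proof (busemann_le_dist_ray x' T HT). pose proof (Htri x' y' (r T)). lra. }
  destruct He as [_ [_ [Hsym _]]].
  pose proof (Hone x y). pose proof (Hone y x). rewrite (Hsym y x) in *.
  apply Rabs_le. lra.
Qed.

Lemma busemann_convex (b : R -> X) x y lam :
  CAT0 e -> complete_geodesic e b -> 0 <= lam <= 1 ->
  busemann (b (x + lam * (y - x))) <= (1 - lam) * busemann (b x) + lam * busemann (b y).
Proof.
  intros Hcat Hb Hlam. apply le_epsilon. intros eps Heps.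
  destruct (busemann_approx (b x) eps Heps) as [Tx [HTx Hx]].
  destruct (busemann_approx (b y) eps Heps) as [Ty [HTy Hy]].
  set (T := Rmax Tx Ty).
  assert (HTxT : Tx <= T) by apply Rmax_l. assert (HTyT : Ty <= T) by apply Rmax_r.
  pose proof (dist_ray_sub_antitone (b x) Tx T ltac:(lra)).
  pose proof (dist_ray_sub_antitone (b y) Ty T ltac:(lra)).
  pose proof (cat0_geodesic_dist_convex e He Hcat b (r T) x y lam Hb Hlam).
  pose proof (busemann_le_dist_ray (b (x + lam * (y - x))) T ltac:(lra)).
  nra.
Qed.

Lemma busemann_asymptotic_bound (r' : R -> X) C s :
  geod_ray e r' -> (forall t, 0 <= t -> exists s, 0 <= s /\ e (r s) (r' t) <= C) -> 0 <= s ->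
  busemann (r' s) + s <= 2 * C + e (r 0) (r' 0).
Proof.
  intros Hr' Hclose Hs. destruct (Hclose s Hs) as [T [HT HTs]].
  pose proof (busemann_le_dist_ray (r' s) T HT).
  destruct He as [_ [_ [Hsym Htri]]].
  pose proof (Htri (r' s) (r T) (r' 0)) as Hs0. pose proof (Htri (r T) (r 0) (r' 0)) as HT0.
  rewrite Hr' in Hs0 by lra. rewrite Hr in HT0 by lra.
  rewrite (Hsym (r' s) (r T)), Rminus_0_r, Rabs_right in Hs0 by lra.
  rewrite Rminus_0_r, Rabs_right in HT0 by lra.
  rewrite (Hsym (r' s) (r T)) in *. lra.
Qed.

Lemma busemann_affine_on_asymptotic_geodesic (b r' : R -> X) C :
  CAT0 e -> complete_geodesic e b -> geod_ray e r' ->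
  (forall s, 0 <= s -> exists t, r' s = b t) ->
  (forall t, 0 <= t -> exists s, 0 <= s /\ e (r s) (r' t) <= C) ->
  exists c eps, Rabs eps = 1 /\ forall x, busemann (b x) = c - eps * x.
Proof.
  intros Hcat Hb Hr' Hr'b Hclose.
  destruct (ray_in_geodesic_affine e b r' Hb Hr' Hr'b) as [s0 [eps [Heps Hparam]]].
  set (G := fun u => busemann (b (s0 + eps * u)) + u).
  assert (HGconv : convex G).
  { intros u v lam Hlam. unfold G.
    replace (s0 + eps * (u + lam * (v - u)))
      with ((s0 + eps * u) + lam * ((s0 + eps * v) - (s0 + eps * u))) by ring.
    pose proof (busemann_convex b (s0 + eps * u) (s0 + eps * v) lam Hcat Hb Hlam). nra. }
  assert (HGbound : forall u, 0 <= u -> G u <= 2 * C + e (r 0) (r' 0)).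
  { intros u Hu. unfold G. rewrite <- Hparam by exact Hu.
    apply busemann_asymptotic_bound; assumption. }
  assert (HGmono : forall u v, u <= v -> G u <= G v).
  { intros u v Huv. unfold G.
    pose proof (busemann_lipschitz (b (s0 + eps * u)) (b (s0 + eps * v))) as Hlip.
    rewrite Hb in Hlip.
    replace (s0 + eps * u - (s0 + eps * v)) with (eps * (u - v)) in Hlip by ring.
    rewrite Rabs_mult, Heps, (Rabs_left1 (u - v)) in Hlip by lra.
    pose proof (Rle_abs (busemann (b (s0 + eps * u)) - busemann (b (s0 + eps * v)))). lra. }
  assert (HGconst : forall u, G u = G 0).
  { intros u. destruct (Rle_dec u 0) as [Hu|Hu].
    - apply Rle_antisym; [apply HGmono; lra | apply (convex_bounded_above_nonincreasing G _ HGconv HGbound); lra].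
    - apply Rle_antisym; [apply (convex_bounded_above_nonincreasing G _ HGconv HGbound); lra | apply HGmono; lra]. }
  assert (Heps2 : eps * eps = 1) by (split_Rabs; nra).
  exists (G 0 + eps * s0), eps. split; [exact Heps|]. intros x.
  assert (Hx : busemann (b x) + eps * (x - s0) = G 0).
  { rewrite <- (HGconst (eps * (x - s0))). unfold G. do 3 f_equal.
    replace (eps * (eps * (x - s0))) with ((eps * eps) * (x - s0)) by ring.
    rewrite Heps2. ring. }
  rewrite <- Hx. ring.
Qed.

End Busemann.

Lemma dist_le_INR_transfer {X} (e1 e2 : X -> X -> R) :
  is_metric e1 -> is_metric e2 -> geodesic_space e1 ->
  (forall x y, e1 x y <= 1 -> e2 x y <= 1) ->
  forall (N : nat) x y, e1 x y <= INR N -> e2 x y <= INR N.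
Proof.
  intros [Hpos1 [Hzero1 _]] [_ [Hzero2 [_ Htri2]]] Hgeod Hunit.
  induction N as [|N IH]; intros x y Hxy.
  - simpl in Hxy. assert (Hxy0 : x = y) by (apply Hzero1; specialize (Hpos1 x y); lra).
    subst y. rewrite (proj2 (Hzero2 x x) eq_refl). simpl; lra.
  - rewrite S_INR in *. destruct (Rle_dec (e1 x y) 1) as [Hle|Hgt].
    + pose proof (Hunit x y Hle). pose proof (pos_INR N). lra.
    + destruct (Hgeod x y) as [c [[_ Hc] [Hc0 Hc1]]].
      assert (Hfirst : e1 x (c 1) = 1).
      { rewrite <- Hc0 at 1. rewrite Hc, Rabs_left by lra. lra. }
      assert (Hrest : e1 (c 1) y = e1 x y - 1).
      { rewrite <- Hc1 at 1. rewrite Hc, Rabs_left by lra. lra. }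
      pose proof (Hunit x (c 1) ltac:(lra)). pose proof (IH (c 1) y ltac:(lra)).
      pose proof (Htri2 x (c 1) y). lra.
Qed.

Lemma busemann_le_transfer {X} (e1 e2 : X -> X -> R) (r : R -> X) x :
  is_metric e1 -> is_metric e2 -> geod_ray e1 r -> geod_ray e2 r ->
  (forall (N : nat) x y, e1 x y <= INR N -> e2 x y <= INR N) ->
  busemann e2 r x <= busemann e1 r x.
Proof.
  intros He1 He2 Hr1 Hr2 Htransfer. apply le_epsilon. intros eps Heps.
  destruct (busemann_approx e1 r He1 Hr1 x eps Heps) as [T [HT HTx]].
  destruct (INR_unbounded (e1 x (r T))) as [N HN].
  (* Walking from [r T] to [r z] keeps [e1 x (r z) - z <= e1 x (r T) - T]
     while making [e1 x (r z)] at most the integer [N]. *)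
  set (z := T + (INR N - e1 x (r T))).
  assert (Hz : e1 x (r z) <= INR N).
  { destruct He1 as [_ [_ [_ Htri]]]. pose proof (Htri x (r T) (r z)) as Hxz.
    rewrite Hr1, Rabs_left1 in Hxz; unfold z in *; lra. }
  pose proof (busemann_le_dist_ray e2 r He2 Hr2 x z ltac:(unfold z; lra)).
  pose proof (Htransfer N x (r z) Hz). unfold z in *. lra.
Qed.

Lemma isometric_along_asymptotic_geodesic {X} (d d' : X -> X -> R) (a b : R -> X) :
  is_metric d -> is_metric d' -> CAT0 d -> geodesic_space d' ->
  (forall x y, d x y <= 1 <-> d' x y <= 1) ->
  complete_geodesic d b -> asymptotic_geodesics d a b ->
  (exists g, complete_geodesic d' g /\ same_image b g) ->
  (forall s t, d (a s) (a t) = d' (a s) (a t)) ->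
  forall s t, d (b s) (b t) = d' (b s) (b t).
Proof.
  intros Hd Hd' Hcat Hgeod' Hunit Hb [r [r' [Hr [Hr' [Hra [Hr'b [C [_ Hclose]]]]]]]]
    [g [Hg [Hbg _]]] Hiso.
  assert (Hr_d' : geod_ray d' r).
  { intros s t Hs Ht. destruct (Hra s Hs) as [u Hu]. destruct (Hra t Ht) as [v Hv].
    rewrite Hu, Hv, <- Hiso, <- Hu, <- Hv. apply Hr; assumption. }
  pose proof (dist_le_INR_transfer d d' Hd Hd' (proj1 Hcat) (fun x y => proj1 (Hunit x y))).
  pose proof (dist_le_INR_transfer d' d Hd' Hd Hgeod' (fun x y => proj2 (Hunit x y))).
  assert (Hbus : forall x, busemann d' r x = busemann d r x)
    by (intro x; apply Rle_antisym; apply busemann_le_transfer; assumption).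
  destruct (busemann_affine_on_asymptotic_geodesic d r Hd Hr b r' C Hcat Hb Hr' Hr'b Hclose)
    as [c [eps [Heps Hlin]]].
  assert (Hexpand : forall s t, Rabs (s - t) <= d' (b s) (b t)).
  { intros s t. pose proof (busemann_lipschitz d' r Hd' Hr_d' (b s) (b t)) as Hlip.
    rewrite !Hbus, !Hlin in Hlip.
    replace (c - eps * s - (c - eps * t)) with (eps * (t - s)) in Hlip by ring.
    rewrite Rabs_mult, Heps, Rabs_minus_sym in Hlip. lra. }
  apply choice in Hbg as [phi Hphi].
  assert (Hd'phi : forall s t, d' (b s) (b t) = Rabs (phi s - phi t))
    by (intros s t; rewrite !Hphi; apply Hg).
  intros s t. rewrite Hb, Hd'phi. symmetry. apply expanding_unit_short_isometry.
  - intros x y. rewrite <- Hd'phi. apply Hexpand.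
  - intros x y Hxy. rewrite <- Hd'phi. apply Hunit. rewrite Hb. exact Hxy.
Qed.

Theorem lemma3 (X : Type) (d d' : X -> X -> R)
  (Hd : is_metric d) (Hdlc : locally_compact d) (Hdgc : geodesically_complete d)
  (Hdcat : CAT0 d) (Hdconn : connected_at_infinity d)
  (Hd' : is_metric d') (Hd'lc : locally_compact d') (Hd'gc : geodesically_complete d')
  (Hd'cat : CAT0 d')
  (Hunit : forall x y, d x y <= 1 <-> d' x y <= 1)
  (a b : R -> X) (n : nat) (f : nat -> R -> X)
  (Ha : f 0%nat = a) (Hb : f n = b)
  (Hchain : asymptotic_chain d f n)
  (Himg : forall i, (i <= n)%nat ->
     exists g, complete_geodesic d' g /\ same_image (f i) g)
  (Hiso : forall t1 t2, d (a t1) (a t2) = d' (a t1) (a t2)) :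
  forall t1 t2, d (b t1) (b t2) = d' (b t1) (b t2).
Proof.
  destruct Hchain as [Hgeod Hasym]. subst b.
  assert (Hall : forall i, (i <= n)%nat -> forall s t, d (f i s) (f i t) = d' (f i s) (f i t)).
  { induction i as [|i IH]; intros Hi.
    - rewrite Ha. exact Hiso.
    - specialize (Hasym (S i) ltac:(lia)). rewrite Nat.sub_1_r in Hasym. simpl in Hasym.
      exact (isometric_along_asymptotic_geodesic d d' (f i) (f (S i)) Hd Hd' Hdcat
        (proj1 Hd'cat) Hunit (Hgeod (S i) Hi) Hasym (Himg (S i) Hi) (IH ltac:(lia))). }
  apply Hall; lia.
Qed.
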